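(* Let $S$ be a finite generating subset of $\mathbb{Z}^k$. There exists a constant $C>0$ such that for every injective group homomorphism $\varphi:\mathbb{Z}^k\to\mathbb{Z}^k$ and every $x\in\mathbb{Z}^k$, $$\|x\|_S\le C\,\frac{(\max\{\|\varphi\|_S,\|\varphi(x)\|_S\})^k}{|\det(\varphi)|}.$$
   Context: $\|\cdot\|_S$ is word length with respect to $S$, $\|\varphi\|_S=\max_{s\in S}\|\varphi(s)\|_S$, and $\det(\varphi)$ is the determinant of the integer matrix representing $\varphi$. *)

From HB Require Import structures.
From mathcomp Require Import all_boot all_order all_algebra.
From Stdlib Require Import ClassicalEpsilon.
Set Implicit Arguments. Unset Strict Implicit. Unset Printing Implicit Defensive.
Import Order.TTheory GRing.Theory Num.Theory.
Local Open Scope ring_scope.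

(* Z^k is 'rV[int]_k ; a finite subset S of Z^k is given as a list S.
   A word over S^{+-1} is a list of pairs (i, b): letter S`_i if b = false,
   its inverse -S`_i if b = true. *)
Definition word_val (k : nat) (S : seq 'rV[int]_k) (w : seq ('I_(size S) * bool))
  : 'rV[int]_k :=
  \sum_(p <- w) (if p.2 then - S`_p.1 else S`_p.1).

Definition word_of_len (k : nat) (S : seq 'rV[int]_k) (x : 'rV[int]_k) (n : nat)
  : bool :=
  [exists t : n.-tuple ('I_(size S) * bool), @word_val k S t == x].

Definition generates (k : nat) (S : seq 'rV[int]_k) : Prop :=
  forall x : 'rV[int]_k, exists n : nat, word_of_len S x n.

(* word length ||x||_S (0 by convention if x is not in the generated subgroup) *)
Definition wordlen (k : nat) (S : seq 'rV[int]_k) (x : 'rV[int]_k) : nat :=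
  match excluded_middle_informative (exists n : nat, word_of_len S x n) with
  | left ex => ex_minn ex
  | right _ => 0%N
  end.

(* ||phi||_S = max_{s in S} ||phi(s)||_S, phi given by x |-> x *m A *)
Definition hom_norm (k : nat) (S : seq 'rV[int]_k) (A : 'M[int]_k) : nat :=
  \max_(s <- S) wordlen S (s *m A).

(* Cramer's rule gives [det(phi) x = phi(x) adj(phi)].  The entries of a
   vector are bounded linearly by its word length (a subadditive function
   bounded on the letters is Lipschitz for the word metric), and conversely its
   word length is bounded linearly by the l1-norm of its entries.  Hence the
   entries of the matrix of phi are O(||phi||_S), those of adj(phi) are
   O(||phi||_S^(k-1)) and those of phi(x) are O(||phi(x)||_S), so
   |det phi| ||x||_S = O(max(||phi||_S, ||phi(x)||_S)^k). *)

From mathcomp Require Import all_boot all_order all_algebra perm ring.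
From Stdlib Require Import ClassicalEpsilon.
Import Order.TTheory GRing.Theory Num.Theory.
Local Open Scope ring_scope.
Set Implicit Arguments. Unset Strict Implicit.

Section WordLength.
Variables (k : nat) (S : seq 'rV[int]_k).

Local Notation word := (seq ('I_(size S) * bool)).

Lemma word_of_lenP x n :
  reflect (exists2 t : word, size t = n & word_val t = x) (word_of_len S x n).
Proof.
apply: (iffP existsP) => [[t /eqP <-]|[t st <-]].
  by exists t; rewrite ?size_tuple.
by exists (Tuple (introT eqP st)).
Qed.

Lemma wordlen_min x n : word_of_len S x n -> (wordlen S x <= n)%N.
Proof.
move=> xn; rewrite /wordlen; case: excluded_middle_informative => [ex|[]].
  by case: ex_minnP => m _; apply.
by exists n.
Qed.

Lemma word_val_cons p (t : word) :
  word_val (p :: t) = (if p.2 then - S`_p.1 else S`_p.1) + word_val t.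
Proof. exact: big_cons. Qed.

Lemma wordlen0 : wordlen S 0 = 0%N.
Proof.
apply/eqP; rewrite -leqn0; apply/wordlen_min/word_of_lenP.
by exists [::]; last exact: big_nil.
Qed.

Hypothesis hS : generates S.

Lemma wordlen_word x : exists2 t : word, size t = wordlen S x & word_val t = x.
Proof.
apply/word_of_lenP; rewrite /wordlen.
case: excluded_middle_informative => [ex|[]]; last exact: hS.
by case: ex_minnP.
Qed.

Lemma wordlenD x y : (wordlen S (x + y) <= wordlen S x + wordlen S y)%N.
Proof.
have [t <- <-] := wordlen_word x; have [u <- <-] := wordlen_word y.
apply/wordlen_min/word_of_lenP; exists (t ++ u); first by rewrite size_cat.
exact: big_cat.
Qed.

Lemma wordlenN x : (wordlen S (- x) <= wordlen S x)%N.
Proof.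
have [t <- <-] := wordlen_word x.
apply/wordlen_min/word_of_lenP; exists [seq (p.1, ~~ p.2) | p <- t].
  exact: size_map.
rewrite /word_val big_map -sumrN.
by apply: eq_bigr => -[i []] _ //=; rewrite opprK.
Qed.

Lemma wordlen_sum (I : Type) (r : seq I) (F : I -> 'rV[int]_k) :
  (wordlen S (\sum_(i <- r) F i) <= \sum_(i <- r) wordlen S (F i))%N.
Proof.
elim/big_ind2: _ => [|x m y n xm yn|//]; first by rewrite wordlen0.
exact: leq_trans (wordlenD x y) (leq_add xm yn).
Qed.

Lemma wordlenMn x n : (wordlen S (x *+ n) <= n * wordlen S x)%N.
Proof.
have := wordlen_sum (index_iota 0 n) (fun=> x).
by rewrite sumr_const_nat sum_nat_const_nat subn0.
Qed.

Lemma wordlenZ (z : int) x : (wordlen S (z *: x) <= `|z|%N * wordlen S x)%N.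
Proof.
have scale_nat m : Posz m *: x = x *+ m by rewrite -natz scaler_nat.
case: z => n; first by rewrite scale_nat wordlenMn.
rewrite NegzE abszN scaleNr scale_nat.
exact: leq_trans (wordlenN _) (wordlenMn _ _).
Qed.

Lemma subadditive_le_wordlen (f : 'rV[int]_k -> nat) (c : nat) :
  f 0 = 0%N -> (forall u v, f (u + v)%R <= f u + f v)%N ->
  (forall s, s \in S -> f s <= c /\ f (- s)%R <= c)%N ->
  forall x, (f x <= wordlen S x * c)%N.
Proof.
move=> f0 fD fS x; have [t <- <-] := wordlen_word x.
elim: t => [|[i b] t IHt]; first by rewrite /word_val big_nil f0.
rewrite word_val_cons mulSn; apply: leq_trans (fD _ _) (leq_add _ IHt).
by have [? ?] := fS _ (mem_nth 0 (ltn_ord i)); case: b.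
Qed.

Definition max_entry : nat := \max_(s <- S) \max_(j < k) `|s 0%R j|%N.

Lemma entry_le_wordlen (x : 'rV[int]_k) j :
  (`|x 0%R j|%N <= wordlen S x * max_entry)%N.
Proof.
apply: (subadditive_le_wordlen (f := fun v => `|v 0%R j|%N)) => [|u v|s Ss].
- by rewrite mxE.
- by rewrite mxE -lez_nat PoszD !abszE ler_normD.
have sj : (`|s 0%R j| <= max_entry)%N.
  apply: leq_trans (leq_bigmax_seq _ Ss isT).
  exact: leq_bigmax.
by rewrite mxE abszN.
Qed.

Lemma wordlen_mulmx_le (A : 'M[int]_k) x :
  (wordlen S (x *m A) <= wordlen S x * hom_norm S A)%N.
Proof.
apply: (subadditive_le_wordlen (f := fun v => wordlen S (v *m A))).
- by rewrite mul0mx wordlen0.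
- by move=> u v; rewrite mulmxDl wordlenD.
move=> s Ss; have sA : (wordlen S (s *m A) <= hom_norm S A)%N.
  exact: (leq_bigmax_seq _ Ss isT).
by rewrite mulNmx (leq_trans (wordlenN _)).
Qed.

Definition max_basis_wordlen : nat := \max_(j < k) wordlen S 'e_j.

Lemma wordlen_le_entries (x : 'rV[int]_k) :
  (wordlen S x <= \sum_j `|x 0%R j|%N * max_basis_wordlen)%N.
Proof.
rewrite {1}(row_sum_delta x); apply: leq_trans (wordlen_sum _ _) _.
apply: leq_sum => j _; apply: leq_trans (wordlenZ _ _) _.
by rewrite leq_mul2l leq_bigmax orbT.
Qed.

Lemma mx_entry_le_hom_norm (A : 'M[int]_k) i j :
  (`|A i j|%N <= max_entry * max_basis_wordlen * hom_norm S A)%N.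
Proof.
have -> : A i j = row i A 0 j by rewrite mxE.
apply: leq_trans (entry_le_wordlen _ _) _.
rewrite -mulnA mulnC leq_mul2l rowE; apply/orP; right.
apply: leq_trans (wordlen_mulmx_le _ _) _.
by rewrite leq_mul2r leq_bigmax orbT.
Qed.

End WordLength.

Section EntryBounds.
Variable R : numDomainType.

Lemma det_norm_le n (B : 'M[R]_n) (b : R) :
  (forall i j, `|B i j| <= b) -> `|\det B| <= n`!%:R * b ^+ n.
Proof.
move=> Bb; apply: le_trans (ler_norm_sum _ _ _) _.
rewrite mulr_natl -card_Sn -sumr_const; apply: ler_sum => s _.
rewrite normrM normr_sign mul1r normr_prod -[X in b ^+ X]card_ord -prodr_const.
by apply: ler_prod => i _; rewrite normr_ge0 Bb.
Qed.

Lemma adj_norm_le n (A : 'M[R]_n) (b : R) i j :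
  (forall i j, `|A i j| <= b) -> `|\adj A i j| <= n.-1`!%:R * b ^+ n.-1.
Proof.
move=> Ab; rewrite mxE normrM normr_sign mul1r.
by apply: det_norm_le => i' j'; rewrite !mxE.
Qed.

Lemma mulmx_row_norm_le n (y : 'rV[R]_n) (B : 'M[R]_n) (a b : R) j :
  (forall i, `|y 0 i| <= a) -> (forall i j, `|B i j| <= b) ->
  `|(y *m B) 0 j| <= n%:R * (a * b).
Proof.
move=> ya Bb; rewrite mxE; apply: le_trans (ler_norm_sum _ _ _) _.
rewrite mulr_natl -[X in _ *+ X]card_ord -sumr_const; apply: ler_sum => i _.
by rewrite normrM ler_pM.
Qed.

Lemma det_mul_entry_norm_le n (A : 'M[R]_n) (x : 'rV[R]_n) (a b : R) j :
  (forall i, `|(x *m A) 0 i| <= a) -> (forall i j, `|A i j| <= b) ->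
  `|\det A| * `|x 0 j| <= n%:R * (a * (n.-1`!%:R * b ^+ n.-1)).
Proof.
move=> ya Ab; have cramer : \det A *: x = (x *m A) *m \adj A.
  by rewrite -mulmxA mul_mx_adj mul_mx_scalar.
have -> : `|\det A| * `|x 0 j| = `|(\det A *: x) 0 j| by rewrite mxE normrM.
by rewrite cramer; apply: mulmx_row_norm_le => // i i'; apply: adj_norm_le.
Qed.

End EntryBounds.

Definition wordlen_det_const k (S : seq 'rV[int]_k) : nat :=
  (k * k * k.-1`! * (max_entry S * max_basis_wordlen S) ^ k)%N.

Lemma wordlen_mul_det_le k (S : seq 'rV[int]_k) (A : 'M[int]_k) x :
  generates S ->
  (wordlen S x)%:Z * `|\det A| <=
    (wordlen_det_const S * maxn (hom_norm S A) (wordlen S (x *m A)) ^ k)%N%:Z.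
Proof.
move=> hS; set m := maxn _ _; set M := max_entry S; set L := max_basis_wordlen S.
have Ab i j : `|A i j| <= (M * L * m)%N%:Z.
  rewrite -abszE lez_nat (leq_trans (mx_entry_le_hom_norm hS A i j)) //.
  by rewrite leq_mul2l leq_maxl orbT.
have yb i : `|(x *m A) 0 i| <= (M * m)%N%:Z.
  rewrite -abszE lez_nat mulnC (leq_trans (entry_le_wordlen hS _ _)) //.
  by rewrite leq_mul2r leq_maxr orbT.
have xb j : (`|x 0%R j| * L)%N%:Z * `|\det A| <=
    L%:Z * (k%:R * ((M * m)%N%:Z * (k.-1`!%:R * (M * L * m)%N%:Z ^+ k.-1))).
  rewrite PoszM abszE mulrAC mulrC [`|x 0 j| * _]mulrC ler_wpM2l //.
  exact: det_mul_entry_norm_le.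
apply: le_trans (_ : (\sum_j `|x 0%R j| * L)%N%:Z * `|\det A| <= _).
  by rewrite ler_wpM2r // lez_nat wordlen_le_entries.
rewrite -natz natr_sum mulr_suml; under eq_bigr do rewrite natz.
apply: le_trans (ler_sum _ (fun j _ => xb j)) _.
rewrite sumr_const card_ord -[_ *+ k]mulr_natr /wordlen_det_const -/M -/L -!natz.
clearbody m M L; clear; case: k => [|n]; first by rewrite mulr0 !mul0n.
rewrite /= le_eqVlt; apply/orP; left; apply/eqP.
by rewrite !natrM !natrX !natrM !exprS !exprMn; ring.
Qed.

Lemma mulmx_injective_det_neq0 (R : idomainType) n (A : 'M[R]_n) :
  injective (fun x : 'rV[R]_n => x *m A) -> \det A != 0.
Proof.
move=> injA; apply/negP => /det0P[v /eqP v_neq0 vA]; apply: v_neq0.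
by apply: injA; rewrite /= vA mul0mx.
Qed.

Theorem mainTheorem10 (k : nat) (S : seq 'rV[int]_k) (hS : generates S) :
  exists C : rat, 0 < C /\
    forall (A : 'M[int]_k),
      injective (fun x : 'rV[int]_k => x *m A) ->
      forall x : 'rV[int]_k,
        ((wordlen S x)%:R : rat) <=
          C * ((maxn (hom_norm S A) (wordlen S (x *m A)))%:R ^+ k)
            / `|(\det A)%:~R|.
Proof.
exists (wordlen_det_const S).+1%:R; split=> // A injA x.
have detA : 0 < `|(\det A)%:~R : rat|.
  by rewrite normr_gt0 intr_eq0 mulmx_injective_det_neq0.
rewrite ler_pdivlMr // -natrX; set m := maxn _ _.
apply: le_trans (_ : (wordlen_det_const S * m ^ k)%N%:R <= _).
  by rewrite !pmulrn -intr_norm -rmorphM ler_int wordlen_mul_det_le.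
by rewrite natrM ler_wpM2r ?ler_nat.
Qed.
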